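(* Let $G=(N,E)$ be a finite simple undirected graph with at least one edge, and consider the coordination game on $G$ in which every player has strategy set $\{1,2\}$. With the solution set being the set $\mathrm{NE}$ of pure Nash equilibria, $$\mathrm{PoSTA}\ge \frac12-\frac{|N|}{2|E|}\qquad\text{and}\qquad \mathrm{PoA}\ge\frac12,$$ and both bounds are tight (there are graphs for which they hold with equality).
   Context: The coordination game on $G=(N,E)$: players are the nodes, each player $i$ chooses a colour $s_i\in\{1,2\}$, and $u_i(s)=|\{j\in\mathrm{Neighb}(i): s_j=s_i\}|$, where $\mathrm{Neighb}(i)$ is the set of neighbours of $i$. $\mathrm{sw}(s)=\sum_i u_i(s)$. For a solution set $D$: a transition is a profile $t$ such that each $t_i$ equals $d_i$ for some $d\in D$. $\mathrm{BR}_i(s_{-i})$ is the set of best responses of $i$. A stable transition is a transition $s$ such that for every $i$ with $s_i\notin\mathrm{BR}_i(s_{-i})$ there is $j\neq i$ with $s_j\notin\mathrm{BR}_j(s_{-j})$ and some $\hat s_j\in\mathrm{BR}_j(s_{-j})$ with $s_i\in\mathrm{BR}_i(\hat s_j,s_{-\{i,j\}})$; $ST(D)$ is the set of stable transitions. $\mathrm{PoSTA}=\min_{s\in ST(\mathrm{NE})}\mathrm{sw}(s)/\max_{s}\mathrm{sw}(s)$ and $\mathrm{PoA}=\min_{s\in\mathrm{NE}}\mathrm{sw}(s)/\max_s\mathrm{sw}(s)$. *)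

From HB Require Import structures.
From mathcomp Require Import all_boot all_order all_algebra.
Set Implicit Arguments. Unset Strict Implicit. Unset Printing Implicit Defensive.
Import Order.TTheory GRing.Theory Num.Theory.

Section Coord.
Variables (T : finType) (e : rel T).

Definition simple_graph : Prop := symmetric e /\ irreflexive e.

Definition nedges : nat := (#|[set p : T * T | e p.1 p.2]|)./2.

(* strategy profiles: each player picks one of two colours (false ~ 1, true ~ 2) *)
Definition profile := {ffun T -> bool}.

Definition util (s : profile) (i : T) : nat :=
  #|[set j | e i j && (s j == s i)]|.

Definition sw (s : profile) : nat := \sum_(i : T) util s i.

Definition upd (s : profile) (i : T) (c : bool) : profile :=
  [ffun j => if j == i then c else s j].

Definition BR (i : T) (s : profile) : {set bool} :=
  [set c : bool | [forall c' : bool, util (upd s i c') i <= util (upd s i c) i]].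

Definition is_NE (s : profile) : bool := [forall i, s i \in BR i s].

Definition is_transition_NE (t : profile) : bool :=
  [forall i, exists d : profile, is_NE d && (t i == d i)].

Definition is_stable (s : profile) : bool :=
  [forall i, (s i \notin BR i s) ==>
    [exists j, [&& j != i, s j \notin BR j s &
      [exists hj in BR j s, s i \in BR i (upd s j hj)]]]].

Definition is_ST_NE (s : profile) : bool := is_transition_NE s && is_stable s.

Definition opt_sw : nat := \max_(s : profile) sw s.

(* min over ST(NE) of sw (the default opt_sw is only used if ST(NE) is empty,
   which never happens since NE is nonempty and NE ⊆ ST(NE)) *)
Definition min_sw_ST : nat := \big[minn/opt_sw]_(s : profile | is_ST_NE s) sw s.
Definition min_sw_NE : nat :=
  \big[minn/opt_sw]_(s : profile | is_NE s) sw s.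

Definition PoSTA : rat := (min_sw_ST%:R / opt_sw%:R)%R.
Definition PoA : rat := (min_sw_NE%:R / opt_sw%:R)%R.

End Coord.

(* A player who best-responds has at least half of its deg i neighbours on its
   own colour, so u_i >= deg i / 2.  In a stable transition, a player who does
   not best-respond becomes a best responder after one neighbour switches, and
   that switch removes at most one agreeing neighbour, so u_i >= deg i / 2 - 1.
   Summing over players, sw >= |E| on NE and sw >= |E| - |N| on ST(NE), while
   the optimum 2|E| is reached by a constant colouring.  Both constant
   colourings are equilibria, so every profile is a transition of NE.  On the
   4-cycle the alternating colouring is a stable transition of welfare 0 and
   two adjacent pairs of equal colours form an equilibrium of welfare 4. *)

From mathcomp Require Import all_boot all_order all_algebra.
From mathcomp.algebra_tactics Require Import ring lra.
Set Implicit Arguments. Unset Strict Implicit. Unset Printing Implicit Defensive.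
Import Order.TTheory GRing.Theory Num.Theory.

Section CoordinationGame.
Variables (T : finType) (e : rel T).

Definition deg i := #|[set k | e i k]|.
Definition degsum := \sum_i deg i.
Definition ncoloured (s : profile T) i c := #|[set k | e i k && (s k == c)]|.

Lemma utilE s i : util e s i = ncoloured s i (s i).
Proof. by []. Qed.

Lemma ncoloured_sum s i c : ncoloured s i c = \sum_k (e i k && (s k == c)).
Proof. by rewrite /ncoloured -sum1dep_card big_mkcond. Qed.

Lemma ncolouredC s i c : ncoloured s i c + ncoloured s i (~~ c) = deg i.
Proof.
rewrite /ncoloured /deg -(cardID [pred k | s k == c] [set k | e i k]).
by congr (_ + _); apply: eq_card => k; rewrite !inE andbC; case: (s k); case: c.
Qed.

Lemma util_upd_le s i j h : j != i -> util e (upd s j h) i <= (util e s i).+1.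
Proof.
move=> ji; rewrite /util [upd s j h i]ffunE eq_sym (negbTE ji).
apply: leq_trans (_ : #|j |: [set k | e i k && (s k == s i)]| <= _).
  by apply/subset_leq_card/subsetP => k; rewrite !inE ffunE; case: (k == j).
by rewrite cardsU1 -add1n leq_add2r leq_b1.
Qed.

Lemma util_le_deg s i : util e s i <= deg i.
Proof. by apply/subset_leq_card/subsetP => k; rewrite !inE => /andP[]. Qed.

Lemma util_const b i : util e [ffun=> b] i = deg i.
Proof. by apply: eq_card => k; rewrite !inE !ffunE eqxx andbT. Qed.

Lemma opt_swE : opt_sw e = degsum.
Proof.
apply/eqP; rewrite eqn_leq; apply/andP; split.
  by apply/bigmax_leqP => s _; apply: leq_sum => i _; apply: util_le_deg.
apply: leq_trans (leq_bigmax (F := sw e) [ffun=> true]).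
by rewrite /sw; under eq_bigr do rewrite util_const.
Qed.

Lemma card_edge_pairs : #|[set p : T * T | e p.1 p.2]| = degsum.
Proof.
rewrite -sum1dep_card -(pair_big_dep xpredT e (fun _ _ => 1)) /=.
by apply: eq_bigr => i _; rewrite sum1dep_card.
Qed.

Lemma nedges_double_le : (nedges e).*2 <= degsum.
Proof. by rewrite -card_edge_pairs /nedges -{2}(odd_double_half #|_|) leq_addl. Qed.

Lemma min_sw_ST_le s : is_ST_NE e s -> min_sw_ST e <= sw e s.
Proof. by move=> ST_s; rewrite -leEnat /min_sw_ST -minEnat bigmin_le_cond. Qed.

Lemma min_sw_NE_le s : is_NE e s -> min_sw_NE e <= sw e s.
Proof. by move=> NE_s; rewrite -leEnat /min_sw_NE -minEnat bigmin_le_cond. Qed.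

Hypothesis e_irr : irreflexive e.

Lemma util_upd_self s i c : util e (upd s i c) i = ncoloured s i c.
Proof.
apply: eq_card => k; rewrite !inE !ffunE eqxx.
by case: (eqVneq k i) => [->|//]; rewrite e_irr.
Qed.

Lemma in_BR s i c : (c \in BR e i s) = (ncoloured s i (~~ c) <= ncoloured s i c).
Proof.
rewrite inE; apply/forallP/idP => [/(_ (~~ c))|le_nc c'].
  by rewrite !util_upd_self.
by rewrite !util_upd_self; case: c' c le_nc => [] [].
Qed.

Lemma BR_deg_le (s : profile T) i : s i \in BR e i s -> deg i <= (util e s i).*2.
Proof. by rewrite in_BR utilE -(ncolouredC s i (s i)) -addnn leq_add2l. Qed.

Lemma stable_deg_le (s : profile T) i : is_stable e s -> deg i <= (util e s i).*2 + 2.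
Proof.
move=> /forallP /(_ i); case: (boolP (s i \in BR e i s)) => [BRi _ | _ /=].
  by rewrite (leq_trans (BR_deg_le BRi)) ?leq_addr.
case/existsP=> j /and3P[ji _ /existsP[h /andP[_ BRi]]].
have si_upd : upd s j h i = s i by rewrite ffunE eq_sym (negbTE ji).
rewrite -si_upd in BRi; apply: leq_trans (BR_deg_le BRi) _.
by rewrite addn2 -doubleS leq_double util_upd_le.
Qed.

Lemma const_NE b : is_NE e [ffun=> b].
Proof.
apply/forallP => i; rewrite in_BR ffunE.
suff -> : ncoloured [ffun=> b] i (~~ b) = 0 by [].
apply/eqP; rewrite cards_eq0; apply/eqP/setP => k.
by rewrite !inE ffunE; case: b; rewrite /= andbF.
Qed.

Lemma all_transition_NE t : is_transition_NE e t.
Proof.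
by apply/forallP => i; apply/existsP; exists [ffun=> t i]; rewrite const_NE ffunE eqxx.
Qed.

Lemma degsum_le_min_sw (P : pred (profile T)) k :
    (forall s, P s -> forall i, deg i <= (util e s i).*2 + k) ->
  degsum <= (\big[minn/opt_sw e]_(s | P s) sw e s).*2 + k * #|T|.
Proof.
move=> deg_le; apply: (big_ind (fun x => degsum <= x.*2 + k * #|T|)).
- by rewrite opt_swE -addnn -addnA leq_addr.
- by move=> x y; rewrite /minn; case: ifP.
move=> s /deg_le {}deg_le.
apply: (@leq_trans (\sum_i ((util e s i).*2 + k))); first exact: leq_sum.
by rewrite big_split sum_nat_const mulnC -(big_morph double doubleD double0).
Qed.

Lemma degsum_le_min_sw_ST : degsum <= (min_sw_ST e).*2 + 2 * #|T|.
Proof. by apply: degsum_le_min_sw => s /andP[_ stable_s] i; apply: stable_deg_le. Qed.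

Lemma degsum_le_min_sw_NE : degsum <= (min_sw_NE e).*2.
Proof.
rewrite -[_.*2]addn0 -(mul0n #|T|); apply: degsum_le_min_sw => s /forallP NE_s i.
by rewrite addn0 BR_deg_le.
Qed.

End CoordinationGame.

Local Open Scope ring_scope.

Lemma half_sub_le_ratio (R : realFieldType) (a n m D : nat) :
    (0 < m)%N -> (m.*2 <= D)%N -> (D <= a.*2 + 2 * n)%N ->
  1 / 2 - n%:R / (2 * m%:R) <= a%:R / D%:R :> R.
Proof.
move=> m_gt0 mD Da.
have D_gt0 : 0 < D%:R :> R by rewrite ltr0n (leq_trans _ mD) ?double_gt0.
have two_m_gt0 : 0 < 2 * m%:R :> R by rewrite -natrM ltr0n muln_gt0.
have two_m_le : 2 * m%:R <= D%:R :> R by rewrite -natrM ler_nat mul2n.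
apply: (@le_trans _ _ (1 / 2 - n%:R / D%:R)).
  by rewrite lerD2l lerN2 ler_wpM2l // lef_pV2 ?posrE.
rewrite lerBlDr -mulrDl ler_pdivlMr //.
have : D%:R <= 2 * a%:R + 2 * n%:R :> R by rewrite -!natrM -natrD ler_nat mul2n.
lra.
Qed.

Lemma half_le_ratio (R : realFieldType) (a m D : nat) :
  (0 < m)%N -> (m.*2 <= D)%N -> (D <= a.*2)%N -> 1 / 2 <= a%:R / D%:R :> R.
Proof.
move=> m_gt0 mD Da; have := @half_sub_le_ratio R a 0 m D m_gt0 mD.
by rewrite mul0r subr0 muln0 addn0; apply.
Qed.

Definition C4 : rel 'I_4 := fun i j => (j == ordS i) || (i == ordS j).
Definition alternating : profile 'I_4 := [ffun i : 'I_4 => odd i].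
Definition two_blocks : profile 'I_4 := [ffun i : 'I_4 => (1 < i)%N].

Lemma C4_simple : simple_graph C4.
Proof. by split=> [i j | [[|[|[|[|//]]]] ?]]; rewrite /C4 // orbC. Qed.

Lemma C4_irr : irreflexive C4.
Proof. by case: C4_simple. Qed.

Lemma degsum_C4 : degsum C4 = 8%N.
Proof.
rewrite /degsum /deg; under eq_bigr do rewrite -sum1dep_card big_mkcond.
by rewrite !big_ord_recl !big_ord0.
Qed.

Lemma sw_alternating : sw C4 alternating = 0%N.
Proof.
rewrite /sw; under eq_bigr do rewrite utilE ncoloured_sum.
by rewrite !big_ord_recl !big_ord0 !ffunE.
Qed.

Lemma sw_two_blocks : sw C4 two_blocks = 4%N.
Proof.
rewrite /sw; under eq_bigr do rewrite utilE ncoloured_sum.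
by rewrite !big_ord_recl !big_ord0 !ffunE.
Qed.

Lemma two_blocks_NE : is_NE C4 two_blocks.
Proof.
apply/forallP => i; rewrite (in_BR C4_irr) !ncoloured_sum.
by case: i => [[|[|[|[|//]]]] ?]; rewrite !big_ord_recl !big_ord0 !ffunE.
Qed.

Lemma alternating_stable : is_stable C4 alternating.
Proof.
apply/forallP => i; apply/implyP => _; apply/existsP; exists (ordS i).
apply/and3P; split; first by case: i => [[|[|[|[|//]]]] ?].
  rewrite (in_BR C4_irr) !ncoloured_sum.
  by case: i => [[|[|[|[|//]]]] ?]; rewrite !big_ord_recl !big_ord0 !ffunE.
apply/existsP; exists (alternating i); rewrite !(in_BR C4_irr) !ncoloured_sum.
by case: i => [[|[|[|[|//]]]] ?]; rewrite !big_ord_recl !big_ord0 !ffunE.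
Qed.

Lemma nedges_C4 : nedges C4 = 4%N.
Proof. by rewrite /nedges card_edge_pairs degsum_C4. Qed.

Lemma PoSTA_C4 : PoSTA C4 = 0.
Proof.
have alternating_ST : is_ST_NE C4 alternating.
  by rewrite /is_ST_NE (all_transition_NE C4_irr) alternating_stable.
have := min_sw_ST_le alternating_ST; rewrite sw_alternating leqn0 => /eqP min_ST0.
by rewrite /PoSTA min_ST0 mul0r.
Qed.

Lemma PoA_C4 : PoA C4 = 1 / 2.
Proof.
have min_NE4 : min_sw_NE C4 = 4%N.
  apply/eqP; rewrite eqn_leq; apply/andP; split.
    by have := min_sw_NE_le two_blocks_NE; rewrite sw_two_blocks.
  by rewrite -leq_double (leq_trans _ (degsum_le_min_sw_NE C4_irr)) ?degsum_C4.
by rewrite /PoA min_NE4 opt_swE degsum_C4; field.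
Qed.

Theorem theorem4 :
  (forall (T : finType) (e : rel T), simple_graph e -> (0 < nedges e)%N ->
     (1 / 2 - (#|T|%:R / (2 * (nedges e)%:R)) <= PoSTA e)
     /\ (1 / 2 <= PoA e))
  /\ (exists (n : nat) (e : rel 'I_n), simple_graph e /\ (0 < nedges e)%N /\
        PoSTA e = 1 / 2 - (n%:R / (2 * (nedges e)%:R)))
  /\ (exists (n : nat) (e : rel 'I_n), simple_graph e /\ (0 < nedges e)%N /\
        PoA e = 1 / 2).
Proof.
split; [|split].
- move=> T e [_ e_irr] m_gt0; rewrite /PoSTA /PoA opt_swE; split.
    exact: half_sub_le_ratio m_gt0 (nedges_double_le e) (degsum_le_min_sw_ST e_irr).
  exact: half_le_ratio m_gt0 (nedges_double_le e) (degsum_le_min_sw_NE e_irr).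
- exists 4%N, C4; rewrite nedges_C4 PoSTA_C4.
  by split; [exact: C4_simple | split => //; field].
- exists 4%N, C4; rewrite nedges_C4 PoA_C4.
  by split; [exact: C4_simple | split].
Qed.
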